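(* Let $0\le q\in L_1^{loc}(\mathbb{R})$ with $\int_{-\infty}^{\infty}q(t)\,dt=\infty$, and for $x\in\mathbb{R}$ let $d(x)=\inf\{d>0:\int_{x-d}^{x+d}q(t)\,dt=2\}$. Then the condition $$\lim_{|x|\to\infty}\int_{x-a}^{x+a}q(t)\,dt=\infty\quad\text{for all }a\in(0,\infty)$$ is equivalent to the condition $\lim_{|x|\to\infty}d(x)=0$. *)

From HB Require Import structures.
From mathcomp Require Import all_boot all_order all_algebra.
From mathcomp Require Import all_classical all_reals all_analysis.
Set Implicit Arguments. Unset Strict Implicit. Unset Printing Implicit Defensive.
Import Order.TTheory GRing.Theory Num.Theory.
Import numFieldNormedType.Exports.
Local Open Scope classical_set_scope.
Local Open Scope ring_scope.

Definition win_int {R : realType} (q : R -> R) (x a : R) : \bar R :=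
  (\int[@lebesgue_measure R]_(t in `[(x - a)%R, (x + a)%R]) (q t)%:E)%E.

Definition dfun {R : realType} (q : R -> R) (x : R) : R :=
  inf [set d : R | 0 < d /\ win_int q x d = 2%:E].

Definition lim_abs_pinfty {R : realType} (f : R -> \bar R) : Prop :=
  forall M : R, exists N : R, forall x : R, N < `|x| -> (M%:E < f x)%E.

Definition lim_abs_zero {R : realType} (f : R -> R) : Prop :=
  forall e : R, 0 < e -> exists N : R, forall x : R, N < `|x| -> `|f x| < e.

From HB Require Import structures.
From mathcomp Require Import all_boot all_order all_algebra.
From mathcomp Require Import all_classical all_reals all_analysis.
From mathcomp Require Import measurable_realfun ring lra.
Import Order.TTheory GRing.Theory Num.Theory.
Import numFieldNormedType.Exports.
Local Open Scope classical_set_scope.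
Local Open Scope ring_scope.

(* Write W(x, a) for the integral of q over [x - a, x + a]; it is nondecreasing
   in a.  If W(x, a) -> +oo for every a, then for large |x| already
   W(x, e/2) > 2, so every radius d with W(x, d) = 2 is below e/2 and
   d(x) <= e/2.  Conversely, W(x, .) is continuous and unbounded (q has infinite
   total integral), so by the intermediate value theorem the set defining d(x)
   is nonempty, and d(x) < r forces W(x, r) >= 2.  Given a and M, pick k > M and
   r = a/k: [x - a, x + a] is the union of k adjacent windows of radius r whose
   centres lie within a of x, so for large |x| each of them carries mass at
   least 2 and W(x, a) >= 2k > M. *)

(* Also when the defining set is empty, since [inf set0 = 0]. *)
Lemma dfun_ge0 {R : realType} (q : R -> R) x : 0 <= dfun q x.
Proof.
rewrite /dfun; set S := [set d | _].
have [[d Sd]|/set0P/negP/negbNE/eqP ->] := pselect (S !=set0); last by rewrite inf0.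
by apply: lb_le_inf; [exists d | move=> e [/ltW]].
Qed.

Section window_integral.
Context {R : realType} {q : R -> R}.
Local Notation mu := (@lebesgue_measure R).
Hypothesis q_ge0 : forall t, 0 <= q t.
Hypothesis q_loc : locally_integrable setT q.

Let measurable_q (D : set R) : measurable_fun D q.
Proof. by case: q_loc => mq _ _; exact: measurable_funS mq. Qed.

Lemma integrable_itv (u v : R) : mu.-integrable `[u, v] (EFin \o q).
Proof.
apply/integrableP; split; first by apply/measurable_EFinP; exact: measurable_q.
by case: q_loc => _ _; apply; [exact: subsetT | exact: segment_compact].
Qed.

Lemma le_win_int x a b : a <= b -> (win_int q x a <= win_int q x b)%E.
Proof.
move=> ab; apply: ge0_subset_integral => //.
- by apply/measurable_EFinP; exact: measurable_q.
- by move=> t _; rewrite lee_fin.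
- by apply: subset_itv; rewrite bnd_simp ?lerD2l ?lerN2.
Qed.

Lemma win_int0 x : win_int q x 0 = 0%E.
Proof. by rewrite /win_int subr0 addr0 set_itv1 integral_set1. Qed.

Lemma win_int_fin_num x a : win_int q x a \is a fin_num.
Proof. exact/integrable_fin_num/integrable_itv. Qed.

Lemma integral_itv_windows (u r : R) (k : nat) : 0 <= r ->
  (\int[mu]_(t in `[u, (u + k%:R * (2 * r))%R]) (q t)%:E =
   \sum_(i < k) win_int q (u + (2 * i%:R + 1) * r)%R r)%E.
Proof.
move=> r0; elim: k => [|k IHk].
  by rewrite big_ord0 mul0r addr0 set_itv1 integral_set1.
rewrite big_ord_recr -IHk -natr1 /win_int.
set m := u + k%:R * (2 * r).
have um : u <= m by rewrite lerDl !mulr_ge0.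
have mM : m <= u + (k%:R + 1) * (2 * r).
  by rewrite lerD2l ler_wpM2r ?mulr_ge0 // lerDl.
rewrite (@itv_bndbnd_setU _ _ _ (BRight m)) ?bnd_simp //.
rewrite integral_setU //; last 2 first.
- by apply/measurable_EFinP; exact: measurable_q.
- apply/disj_setPS => z [] /=; rewrite !in_itv /= => /andP[_ zm] /andP[mz _].
  by move: (lt_le_trans mz zm); rewrite ltxx.
rewrite integral_itv_obnd_cbnd; last by apply/measurable_EFinP; exact: measurable_q.
have -> : u + (2 * k%:R + 1) * r - r = m by rewrite /m; ring.
by have -> : u + (2 * k%:R + 1) * r + r = u + (k%:R + 1) * (2 * r) by ring.
Qed.

Lemma win_int_ge_cover x r c (k : nat) : 0 <= r ->
  (forall y, `|y - x| <= k%:R * r -> (c%:E <= win_int q y r)%E) ->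
  ((k%:R * c)%:E <= win_int q x (k%:R * r))%E.
Proof.
move=> r0 near_x.
have -> : win_int q x (k%:R * r) =
    (\int[mu]_(t in `[(x - k%:R * r)%R, (x - k%:R * r + k%:R * (2 * r))%R])
      (q t)%:E)%E.
  by rewrite /win_int; congr (\int[mu]_(t in `[_, _]) _)%E; apply: funext => _; ring.
have -> : (k%:R * c)%:E = (\sum_(i < k) c%:E)%E.
  by rewrite sumEFin sumr_const card_ord mulr_natl.
rewrite integral_itv_windows //.
apply: lee_sum => i _; apply: near_x.
have ik : i%:R + 1 <= k%:R :> R by rewrite natr1 ler_nat.
have i0 : 0 <= i%:R :> R by [].
by apply/ler_normlP; split; nra.
Qed.

Lemma continuous_primitive (L t : R) : L < t ->
  {for t, continuous (fun s => parameterized_integral mu L s q)}.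
Proof.
move=> Lt; apply: (@within_continuous_continuous _ _ _ L (t + 1)).
- lra.
- by apply: parameterized_integral_continuous; [lra | exact: integrable_itv].
- by rewrite in_itv /=; apply/andP; split; lra.
Qed.

Lemma fine_win_int_primitive (L x a : R) : 0 <= a -> L <= x - a ->
  fine (win_int q x a) =
  parameterized_integral mu L (x + a) q - parameterized_integral mu L (x - a) q.
Proof.
move=> a0 Lxa; rewrite /parameterized_integral.
rewrite (@Rintegral_itvB _ q (BLeft L) (BRight (x + a)) (x - a)).
- rewrite Rintegral_itv_obnd_cbnd //.
  apply: integrableS (integrable_itv (x - a) (x + a)) => //.
  by move=> s; rewrite /= !in_itv /= => /andP[? ?]; apply/andP; split; lra.
- exact: integrable_itv.
- by rewrite bnd_simp.
- by rewrite bnd_simp; lra.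
Qed.

Lemma win_int_IVT (y A c : R) : 0 <= A -> 0 <= c -> (c%:E <= win_int q y A)%E ->
  exists2 r, 0 <= r <= A & win_int q y r = c%:E.
Proof.
move=> A0 c0 cA.
pose P s := parameterized_integral mu (y - A - 1) s q.
pose h r := P (y + r) - P (y - r).
have win_h r : 0 <= r <= A -> win_int q y r = (h r)%:E.
  move=> /andP[r0 rA]; rewrite /h /P -fine_win_int_primitive //; last by lra.
  by rewrite fineK // win_int_fin_num.
have hc : {within `[0, A], continuous h}.
  apply: continuous_in_subspaceT => r; rewrite inE /= in_itv /= => /andP[r0 rA].
  apply: cvgB.
  - apply: (@continuous_comp _ _ _ (fun s => y + s) P).
      exact: (cvgD (cvg_cst y) cvg_id).
    by apply: continuous_primitive; lra.
  - apply: (@continuous_comp _ _ _ (fun s => y - s) P).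
      exact: (cvgB (cvg_cst y) cvg_id).
    by apply: continuous_primitive; lra.
have h0 : h 0 = 0 by apply/EFin_inj; rewrite -win_h ?lexx // win_int0.
have hA : c <= h A by rewrite -lee_fin -win_h // lexx A0.
have [|r] := IVT A0 hc (v := c); first by rewrite ge_min le_max h0 hA c0 orbT.
by rewrite in_itv /= => rA hr; exists r => //; rewrite win_h // hr.
Qed.

Lemma dfun_le x r : 0 <= r -> (2%:E < win_int q x r)%E -> dfun q x <= r.
Proof.
move=> r0 W2; rewrite /dfun; set S := [set d | _].
have S_lt_r d : S d -> d < r.
  move=> [_ Wd]; rewrite ltNge; apply: contraTN W2 => /(le_win_int x).
  by rewrite Wd -leNgt.
have [[d Sd]|/set0P/negP/negbNE/eqP ->] := pselect (S !=set0); last by rewrite inf0.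
apply: le_trans (ltW (S_lt_r d Sd)).
by apply: ge_inf Sd; exists 0 => e [/ltW].
Qed.

Hypothesis q_inf : (\int[mu]_(t in setT) (q t)%:E)%E = +oo%E.

Lemma win_int_cvgy y : win_int q y n%:R @[n --> \oo] --> +oo%E.
Proof.
pose F n : set R := `[y - n%:R, y + n%:R]%classic.
have F_nd : nondecreasing_seq F.
  move=> m n mn; rewrite subsetEset; apply: subset_itv; rewrite bnd_simp.
    by rewrite lerD2l lerN2 ler_nat.
  by rewrite lerD2l ler_nat.
have F_cover : \bigcup_n F n = setT.
  apply/seteqP; split => // t _; exists (Num.Def.trunc `|t - y|).+1 => //.
  have := truncnS_gt `|t - y|; set n := (Num.Def.trunc _).+1%:R.
  by move=> /ltr_normlP[? ?]; rewrite /F /= in_itv /=; apply/andP; split; lra.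
rewrite -q_inf -F_cover.
apply: ge0_nondecreasing_set_cvg_integral => //.
- by move=> n; apply/measurable_EFinP; exact: measurable_q.
- by move=> n t _; rewrite lee_fin.
Qed.

Lemma exists_win_int_eq y c : 0 < c -> exists2 d, 0 < d & win_int q y d = c%:E.
Proof.
move=> c0; have [N _ /(_ N (leqnn N)) cN] := (cvgeyPge _).1 (win_int_cvgy y) c.
have [d /andP[d0 _] dc] := win_int_IVT _ _ _ (ler0n R N) (ltW c0) cN.
exists d => //; rewrite lt_neqAle d0 andbT; apply/eqP => d_eq0.
by move: dc; rewrite -d_eq0 win_int0 => -[]/eqP; rewrite eq_sym gt_eqF.
Qed.

Lemma win_int_ge2 x r : dfun q x < r -> (2%:E <= win_int q x r)%E.
Proof.
have [d d0 Wd] := exists_win_int_eq x _ (ltr0Sn R 1).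
case/(inf_lt (ex_intro _ d (conj d0 Wd))) => e [_ We] er.
by rewrite -We le_win_int // ltW.
Qed.

End window_integral.

Theorem lemma1p1 (R : realType) (q : R -> R)
  (q_ge0 : forall t : R, 0 <= q t)
  (q_loc : locally_integrable setT q)
  (q_inf : (\int[@lebesgue_measure R]_(t in setT) (q t)%:E)%E = +oo%E) :
  (forall a : R, 0 < a -> lim_abs_pinfty (fun x => win_int q x a))
  <-> lim_abs_zero (dfun q).
Proof.
split => [W_cvgy e e0 | dfun_cvg0 a a0 M].
- have e2_gt0 : 0 < e / 2 by lra.
  have [N W_gt2] := W_cvgy (e / 2) e2_gt0 2.
  exists N => x /W_gt2 W2; rewrite ger0_norm ?dfun_ge0 //.
  by have := dfun_le q_ge0 q_loc _ _ (ltW e2_gt0) W2; lra.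
- pose k := (Num.Def.trunc `|M|).+1.
  have Mk : M < k%:R by apply: le_lt_trans (truncnS_gt `|M|); exact: ler_norm.
  have k0 : 0 < k%:R :> R by rewrite ltr0n.
  pose r := a / k%:R.
  have [N dfun_small] := dfun_cvg0 r (divr_gt0 a0 k0).
  exists (N + a) => x xNa.
  have a_kr : a = k%:R * r by rewrite /r mulrC divfK // gt_eqF.
  rewrite a_kr; apply: (lt_le_trans _ (win_int_ge_cover q_loc x r 2 k _ _)).
  + by rewrite lte_fin; lra.
  + by rewrite ltW // divr_gt0.
  + move=> y; rewrite -a_kr => yx; apply: win_int_ge2 => //.
    apply: le_lt_trans (ler_norm _) (dfun_small y _).
    by have := ler_distD y x 0; rewrite !subr0 distrC; lra.
Qed.
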